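(* For every integer $k\ge2$, with $p_k:=2^{1-k}$, $$p_k\,G\!\left(\frac{k^2+k+1}{(2k+1)^2}\right)+(1-p_k)\,G\!\left(\frac{k^2+k-1}{(2k+1)^2}\right)\ \ge\ G\!\left(\tfrac14\right),$$ and moreover $$p_k\,G\!\left(\frac{k^2+k+1}{(2k+1)^2}\right)+(1-p_k)\cdot\frac12\ \ge\ G\!\left(\tfrac14\right).$$
   Context: $\Phi$ denotes the standard normal distribution function. For $c>0$, $G(c):=\frac12\left(1-\frac12\,\frac{1-\Phi(c^{-1/2})}{1-\Phi(\sqrt2)}\right)$. *)

From Stdlib Require Import Reals Lra.
Open Scope R_scope.

Definition phi (t : R) : R := exp (- (t * t) / 2) / sqrt (2 * PI).

Lemma phi_continuous : continuity phi.
Proof.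
  unfold phi. intro x.
  apply continuity_pt_div.
  - apply (continuity_pt_comp (fun t => - (t * t) / 2) exp).
    + unfold Rdiv. apply continuity_pt_mult.
      * apply continuity_pt_opp. apply continuity_pt_mult;
          apply derivable_continuous_pt; apply derivable_pt_id.
      * apply continuity_pt_const. intros a b; reflexivity.
    + apply derivable_continuous_pt. apply derivable_pt_exp.
  - apply continuity_pt_const. intros a b; reflexivity.
  - apply Rgt_not_eq. apply sqrt_lt_R0. pose proof PI_RGT_0. lra.
Qed.

Lemma phi_integrable : forall a b : R, Riemann_integrable phi a b.
Proof.
  intros a b. destruct (Rle_dec a b) as [H|H].
  - apply continuity_implies_RiemannInt; [exact H|].
    intros; apply phi_continuous.
  - apply RiemannInt_P1. apply continuity_implies_RiemannInt; [lra|].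
    intros; apply phi_continuous.
Qed.

(* standard normal distribution function:
   Phi x = 1/2 + int_0^x phi  (since int_{-oo}^0 phi = 1/2) *)
Definition Phi (x : R) : R := / 2 + RiemannInt (phi_integrable 0 x).

Definition G (c : R) : R :=
  / 2 * (1 - / 2 * ((1 - Phi (/ sqrt c)) / (1 - Phi (sqrt 2)))).

(** With [tail x = 1 - Phi x] one has [G c = 1/2 - tail (c^(-1/2)) / (4 tail (sqrt 2))],
    and the three arguments of [G] correspond to [x1 = sqrt (4 - 3/A) < x0 = 2 <
    x2 = sqrt (4 + 5/B)], where [A = k^2 + k + 1] and [B = k^2 + k - 1].  The first
    inequality thus says [p * mass x1 2 <= (1 - p) * mass 2 x2] for the normal masses of
    the two intervals.  As the density [phi] decreases on [[0, oo)], it suffices that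
    [p (2 - x1) phi x1 <= (1 - p) (x2 - 2) phi x2], and [phi x1 / phi x2 =
    exp ((x2^2 - x1^2) / 2)] equals [exp (5/7)] for [k = 2] and is at most [e] for [k >= 3].
    The second inequality follows because [G c <= 1/2] whenever [tail (c^(-1/2)) >= 0].
    Since [Phi] is defined as [1/2 + int_0^x phi], the signs of [tail x2] and
    [tail (sqrt 2)] are not free: they come from an upper Riemann sum of [phi] over
    [[0, 56/25]] with step [1/25], together with [PI > 3.13]. *)

From Stdlib Require Import Reals Lra Lia List.
Import ListNotations.
Open Scope R_scope.

Lemma div_antitone c a b : 0 <= c -> 0 < a <= b -> c / b <= c / a.
Proof.
  intros Hc Hab. unfold Rdiv.
  apply Rmult_le_compat_l; [| apply Rinv_le_contravar]; lra.
Qed.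

Lemma inv_pow2_bounds n : 0 < / 2 ^ n <= 1.
Proof.
  pose proof (pow_R1_Rle 2 n ltac:(lra)).
  split; [apply Rinv_0_lt_compat; lra |].
  rewrite <- Rinv_1. apply Rinv_le_contravar; lra.
Qed.

Lemma inv_sqrt_sq c : 0 < c -> / sqrt c * / sqrt c = / c.
Proof.
  intros Hc. rewrite <- Rinv_mult, sqrt_sqrt; lra.
Qed.

Lemma pow_le_exp (n : nat) t :
  - INR (S n) <= t -> (1 + t / INR (S n)) ^ S n <= exp t.
Proof.
  intros Ht. pose proof (lt_0_INR (S n) (Nat.lt_0_succ n)) as Hn.
  replace (exp t) with (exp (t / INR (S n)) ^ S n).
  - apply pow_incr. split.
    + apply (Rmult_le_reg_l (INR (S n))); [exact Hn |].
      replace (INR (S n) * (1 + t / INR (S n))) with (INR (S n) + t) by (field; lra). lra.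
    + apply exp_ineq1_le.
  - rewrite <- (exp_ln (exp (t / INR (S n)) ^ S n)) by (apply pow_lt, exp_pos).
    rewrite ln_pow, ln_exp by apply exp_pos. f_equal. field. lra.
Qed.

Definition mass (a b : R) : R := RiemannInt (phi_integrable a b).

Definition tail (x : R) : R := 1 - Phi x.

Lemma tail_split a b : tail a = tail b + mass a b.
Proof.
  unfold tail, Phi, mass.
  rewrite <- (RiemannInt_P26 (phi_integrable 0 a) (phi_integrable a b)). ring.
Qed.

Lemma mass_split a b c : mass a c = mass a b + mass b c.
Proof. unfold mass. symmetry. apply RiemannInt_P26. Qed.

Lemma sqrt_2PI_pos : 0 < sqrt (2 * PI).
Proof. apply sqrt_lt_R0. pose proof PI_RGT_0. lra. Qed.

Lemma phi_pos t : 0 < phi t.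
Proof. apply Rdiv_lt_0_compat; [apply exp_pos | exact sqrt_2PI_pos]. Qed.

Lemma phi_antitone a t : 0 <= a <= t -> phi t <= phi a.
Proof.
  intros Hat. unfold phi, Rdiv.
  apply Rmult_le_compat_r; [left; apply Rinv_0_lt_compat, sqrt_2PI_pos |].
  destruct (Req_dec a t) as [-> | Hne]; [lra |].
  left. apply exp_increasing. nra.
Qed.

Lemma phi_shift x y : phi x = exp ((y * y - x * x) / 2) * phi y.
Proof. unfold phi, Rdiv. rewrite <- Rmult_assoc, <- exp_plus. do 2 f_equal. field. Qed.

Lemma mass_bounds a b :
  0 <= a <= b -> phi b * (b - a) <= mass a b <= phi a * (b - a).
Proof.
  intros Hab. apply RiemannInt_const_bound; [lra |].
  intros t Ht. split; apply phi_antitone; lra.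
Qed.

Lemma mass_pos a b : 0 <= a < b -> 0 < mass a b.
Proof.
  intros Hab. destruct (mass_bounds a b ltac:(lra)) as [Hlow _].
  pose proof (phi_pos b). nra.
Qed.

Fixpoint gauss_dominated (h : R) (i : Z) (us : list R) : Prop :=
  match us with
  | [] => True
  | u :: us => exp (- ((IZR i * h) ^ 2 / 2)) <= u /\ gauss_dominated h (Z.succ i) us
  end.

Lemma mass_le_upper_sum h i us :
  0 <= h -> (0 <= i)%Z -> gauss_dominated h i us ->
  mass (IZR i * h) (IZR (i + Z.of_nat (length us)) * h)
    <= h * fold_right Rplus 0 us / sqrt (2 * PI).
Proof.
  revert i. induction us as [| u us IH]; intros i Hh Hi Hdom; cbn [length fold_right].
  - unfold mass. rewrite Z.add_0_r, RiemannInt_P9. unfold Rdiv. lra.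
  - destruct Hdom as [Hu Hdom].
    replace (i + Z.of_nat (S (length us)))%Z with (Z.succ i + Z.of_nat (length us))%Z
      by lia.
    rewrite (mass_split _ (IZR (Z.succ i) * h)).
    pose proof (IH (Z.succ i) Hh ltac:(lia) Hdom) as Hrest.
    assert (Ha : 0 <= IZR i * h) by (apply Rmult_le_pos; [apply IZR_le |]; assumption).
    rewrite succ_IZR in *.
    destruct (mass_bounds (IZR i * h) ((IZR i + 1) * h) ltac:(lra)) as [_ Hfirst].
    assert (Hphi : phi (IZR i * h) <= u / sqrt (2 * PI)).
    { unfold phi, Rdiv. apply Rmult_le_compat_r.
      - left. apply Rinv_0_lt_compat, sqrt_2PI_pos.
      - replace (- (IZR i * h * (IZR i * h)) * / 2) with (- ((IZR i * h) ^ 2 / 2))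
          by field.
        exact Hu. }
    assert (Hfirst' : phi (IZR i * h) * ((IZR i + 1) * h - IZR i * h)
                      <= h * u / sqrt (2 * PI)).
    { replace ((IZR i + 1) * h - IZR i * h) with h by ring.
      replace (h * u / sqrt (2 * PI)) with (h * (u / sqrt (2 * PI))) by (unfold Rdiv; ring).
      rewrite Rmult_comm. apply Rmult_le_compat_l; assumption. }
    unfold Rdiv in *. lra.
Qed.

(** [exp (- (i/25)^2 / 2)] rounded up, for [i = 0, ..., 55]. *)
Definition gauss_table : list R :=
  [1; 0.99921; 0.99681; 0.99283; 0.98729; 0.98021; 0.97162; 0.96157; 0.95011;
   0.93729; 0.92317; 0.90781; 0.89129; 0.87367; 0.85504; 0.83549; 0.81508;
   0.79392; 0.77208; 0.74965; 0.72673; 0.70340; 0.67975; 0.65587; 0.63183;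
   0.60772; 0.58361; 0.55959; 0.53572; 0.51208; 0.48872; 0.46570; 0.44309;
   0.42092; 0.39925; 0.37811; 0.35755; 0.33759; 0.31826; 0.29958; 0.28158;
   0.26425; 0.24762; 0.23169; 0.21646; 0.20193; 0.18810; 0.17496; 0.16249;
   0.15069; 0.13955; 0.12904; 0.11915; 0.10985; 0.10114; 0.09299].

Lemma exp_neg_le_of_pow64 y u : 0 <= y -> 1 <= (1 + y / 64) ^ 64 * u -> exp (- y) <= u.
Proof.
  intros Hy.
  (* the power is kept out of the context of [lra] and [nra], which would expand it *)
  assert (Hpow : (1 + y / 64) ^ 64 <= exp y).
  { assert (E64 : INR 64 = 64) by (rewrite INR_IZR_INZ; simpl Z.of_nat; reflexivity).
    pose proof (pow_le_exp 63 y ltac:(rewrite E64; lra)) as H. rewrite E64 in H. exact H. }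
  assert (Hpos : 0 < (1 + y / 64) ^ 64) by (apply pow_lt; clear Hpow; lra).
  generalize dependent ((1 + y / 64) ^ 64). intros P Hpow Hpos Hu.
  rewrite exp_Ropp. apply (Rmult_le_reg_l (exp y)); [apply exp_pos |].
  rewrite Rinv_r by (apply Rgt_not_eq, exp_pos). nra.
Qed.

Lemma gauss_table_dominates : gauss_dominated (1 / 25) 0 gauss_table.
Proof.
  cbv [gauss_table gauss_dominated Z.succ Z.add Pos.add Pos.succ].
  repeat split; apply exp_neg_le_of_pow64; lra.
Qed.

Lemma PI_gt_313_100 : 313 / 100 < PI.
Proof.
  destruct (PI_2_3_7_ineq 0) as [H _].
  cbn [sum_f_R0 Nat.mul] in H. unfold tg_alt, PI_2_3_7_tg, Ratan_seq in H.
  simpl in H. lra.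
Qed.

Lemma mass_0_56_25 : mass 0 (56 / 25) <= / 2.
Proof.
  pose proof (mass_le_upper_sum (1 / 25) 0 gauss_table ltac:(lra) ltac:(lia)
                gauss_table_dominates) as H.
  change (0 + Z.of_nat (length gauss_table))%Z with 56%Z in H.
  replace (IZR 0 * (1 / 25)) with 0 in H by ring.
  replace (IZR 56 * (1 / 25)) with (56 / 25) in H by field.
  cbn [gauss_table fold_right] in H.
  assert (Hs : 249 / 100 <= sqrt (2 * PI)).
  { rewrite <- (sqrt_pow2 (249 / 100)) by lra. apply sqrt_le_1_alt.
    pose proof PI_gt_313_100. lra. }
  pose proof sqrt_2PI_pos.
  eapply Rle_trans; [exact H |].
  apply (Rmult_le_reg_r (sqrt (2 * PI))); [assumption |].
  unfold Rdiv. rewrite Rmult_assoc, Rinv_l by lra. lra.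
Qed.

Lemma tail_nonneg x : 0 <= x <= 56 / 25 -> 0 <= tail x.
Proof.
  intros Hx. pose proof mass_0_56_25.
  pose proof (tail_split 0 x). pose proof (tail_split x (56 / 25)).
  pose proof (tail_split 0 (56 / 25)).
  destruct (mass_bounds x (56 / 25) Hx) as [Hlow _].
  pose proof (phi_pos (56 / 25)).
  assert (tail 0 = / 2) by (unfold tail, Phi; rewrite RiemannInt_P9; field).
  nra.
Qed.

Lemma tail_sqrt2_pos : 0 < tail (sqrt 2).
Proof.
  assert (Hs : sqrt 2 < 56 / 25).
  { rewrite <- (sqrt_pow2 (56 / 25)) by lra. apply sqrt_lt_1_alt. lra. }
  pose proof (sqrt_pos 2).
  rewrite (tail_split (sqrt 2) (56 / 25)).
  pose proof (tail_nonneg (56 / 25) ltac:(lra)).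
  pose proof (mass_pos (sqrt 2) (56 / 25) ltac:(lra)). lra.
Qed.

Lemma tail_mix_le p x1 x0 x2 :
  0 <= x1 <= x0 -> x0 <= x2 -> 0 <= p <= 1 ->
  p * (x0 - x1) * exp ((x2 * x2 - x1 * x1) / 2) <= (1 - p) * (x2 - x0) ->
  p * tail x1 + (1 - p) * tail x2 <= tail x0.
Proof.
  intros H10 H02 Hp Hbal.
  rewrite (tail_split x1 x0), (tail_split x0 x2).
  destruct (mass_bounds x1 x0 H10) as [_ Hleft].
  destruct (mass_bounds x0 x2 ltac:(lra)) as [Hright _].
  rewrite (phi_shift x1 x2) in Hleft.
  pose proof (phi_pos x2). pose proof (exp_pos ((x2 * x2 - x1 * x1) / 2)).
  assert (p * mass x1 x0 <= (1 - p) * mass x0 x2); [| nra].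
  apply Rle_trans with (p * (x0 - x1) * exp ((x2 * x2 - x1 * x1) / 2) * phi x2).
  - replace (p * (x0 - x1) * exp ((x2 * x2 - x1 * x1) / 2) * phi x2)
      with (p * (exp ((x2 * x2 - x1 * x1) / 2) * phi x2 * (x0 - x1))) by ring.
    apply Rmult_le_compat_l; lra.
  - apply Rle_trans with ((1 - p) * (x2 - x0) * phi x2).
    + apply Rmult_le_compat_r; lra.
    + rewrite Rmult_assoc. apply Rmult_le_compat_l; [lra |]. lra.
Qed.

Lemma G_tail c : G c = / 2 - tail (/ sqrt c) / (4 * tail (sqrt 2)).
Proof.
  pose proof tail_sqrt2_pos. unfold G. fold (tail (/ sqrt c)) (tail (sqrt 2)).
  field. lra.
Qed.

Lemma G_mix_ge p c0 c1 c2 :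
  p * tail (/ sqrt c1) + (1 - p) * tail (/ sqrt c2) <= tail (/ sqrt c0) ->
  p * G c1 + (1 - p) * G c2 >= G c0.
Proof.
  intros Hmix. rewrite !G_tail. pose proof tail_sqrt2_pos.
  assert (Hdiv : (p * tail (/ sqrt c1) + (1 - p) * tail (/ sqrt c2)) / (4 * tail (sqrt 2))
                 <= tail (/ sqrt c0) / (4 * tail (sqrt 2))).
  { apply Rmult_le_compat_r; [left; apply Rinv_0_lt_compat; lra | exact Hmix]. }
  replace (p * (/ 2 - tail (/ sqrt c1) / (4 * tail (sqrt 2)))
           + (1 - p) * (/ 2 - tail (/ sqrt c2) / (4 * tail (sqrt 2))))
    with (/ 2 - (p * tail (/ sqrt c1) + (1 - p) * tail (/ sqrt c2)) / (4 * tail (sqrt 2)))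
    by (field; lra).
  lra.
Qed.

Lemma G_le_half c : 0 <= tail (/ sqrt c) -> G c <= / 2.
Proof.
  intros Ht. rewrite G_tail. pose proof tail_sqrt2_pos.
  assert (0 <= tail (/ sqrt c) / (4 * tail (sqrt 2))); [| lra].
  unfold Rdiv. apply Rmult_le_pos; [exact Ht | left; apply Rinv_0_lt_compat; lra].
Qed.

Lemma exp_5_7_le : exp (5 / 7) <= 21 / 10.
Proof.
  assert (E16 : INR 16 = 16) by (rewrite INR_IZR_INZ; simpl Z.of_nat; reflexivity).
  pose proof (pow_le_exp 15 (- (5 / 7)) ltac:(rewrite E16; lra)) as H.
  rewrite exp_Ropp, E16 in H.
  assert (Hpos : 0 < (1 + - (5 / 7) / 16) ^ 16) by (apply pow_lt; lra).
  apply (Rmult_le_reg_r (/ exp (5 / 7))); [apply Rinv_0_lt_compat, exp_pos |].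
  rewrite Rinv_r by (apply Rgt_not_eq, exp_pos). nra.
Qed.

Lemma balance_k2 x1 x2 :
  0 < x1 -> 0 < x2 -> x1 * x1 = 4 - 3 / 7 -> x2 * x2 = 4 + 5 / 5 ->
  / 2 * (2 - x1) * exp ((x2 * x2 - x1 * x1) / 2) <= (1 - / 2) * (x2 - 2).
Proof.
  intros Hx1 Hx2 E1 E2.
  replace ((x2 * x2 - x1 * x1) / 2) with (5 / 7) by (rewrite E1, E2; field).
  pose proof exp_5_7_le. pose proof (exp_pos (5 / 7)).
  assert (1889 / 1000 <= x1 <= 2) by (split; nra).
  assert (2236 / 1000 <= x2) by nra.
  assert ((2 - x1) * exp (5 / 7) <= 111 / 1000 * (21 / 10))
    by (apply Rmult_le_compat; lra).
  lra.
Qed.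

Lemma balance_large A B p x1 x2 :
  11 <= B <= A -> 0 <= p <= / 4 -> 0 < x1 -> 0 < x2 ->
  x1 * x1 = 4 - 3 / A -> x2 * x2 = 4 + 5 / B ->
  p * (2 - x1) * exp ((x2 * x2 - x1 * x1) / 2) <= (1 - p) * (x2 - 2).
Proof.
  intros HAB Hp Hx1 Hx2 E1 E2.
  assert (HiAB : / A <= / B) by (apply Rinv_le_contravar; lra).
  assert (HiB : / B <= / 11) by (apply Rinv_le_contravar; lra).
  assert (HiA : 0 < / A) by (apply Rinv_0_lt_compat; lra).
  unfold Rdiv in E1, E2.
  assert (Hexp : exp ((x2 * x2 - x1 * x1) / 2) <= 3).
  { apply Rle_trans with (exp 1); [| exact exp_le_3].
    assert (Hd : (x2 * x2 - x1 * x1) / 2 <= 1) by lra.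
    destruct Hd as [Hd | Hd]; [left; apply exp_increasing, Hd | rewrite Hd; lra]. }
  assert (Hx1b : 2 - x1 <= / A) by nra.
  assert (Hx2b : / B <= x2 - 2) by nra.
  pose proof (exp_pos ((x2 * x2 - x1 * x1) / 2)).
  assert (Hprod : (2 - x1) * exp ((x2 * x2 - x1 * x1) / 2) <= / B * 3)
    by (apply Rmult_le_compat; nra).
  nra.
Qed.

Lemma balance (k : nat) x1 x2 :
  (2 <= k)%nat -> 0 < x1 -> 0 < x2 ->
  x1 * x1 = 4 - 3 / (INR k ^ 2 + INR k + 1) ->
  x2 * x2 = 4 + 5 / (INR k ^ 2 + INR k - 1) ->
  / 2 ^ (k - 1) * (2 - x1) * exp ((x2 * x2 - x1 * x1) / 2)
    <= (1 - / 2 ^ (k - 1)) * (x2 - 2).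
Proof.
  intros hk Hx1 Hx2 E1 E2.
  destruct (Nat.eq_dec k 2) as [-> | Hk2].
  - replace (/ 2 ^ (2 - 1)) with (/ 2) by (simpl; field).
    apply balance_k2; [assumption | assumption | rewrite E1 | rewrite E2]; simpl; field.
  - assert (Hk3 : 3 <= INR k) by (replace 3 with (INR 3) by (simpl; ring); apply le_INR; lia).
    apply (balance_large (INR k ^ 2 + INR k + 1) (INR k ^ 2 + INR k - 1)); try assumption.
    + split; nra.
    + split; [left; apply inv_pow2_bounds |].
      replace (k - 1)%nat with (S (S (k - 3))) by lia.
      pose proof (pow_R1_Rle 2 (k - 3) ltac:(lra)).
      apply Rinv_le_contravar; [lra | simpl; lra].
Qed.

Lemma inv_sqrt_div_sq N m :
  0 < N -> 0 < m -> 0 < / sqrt (N / m ^ 2) /\ / sqrt (N / m ^ 2) * / sqrt (N / m ^ 2) = m ^ 2 / N.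
Proof.
  intros HN Hm. assert (Hc : 0 < N / m ^ 2) by (apply Rdiv_lt_0_compat; [| apply pow_lt]; lra).
  split; [apply Rinv_0_lt_compat, sqrt_lt_R0, Hc |].
  rewrite inv_sqrt_sq by exact Hc. field. lra.
Qed.

Lemma G_args kr :
  2 <= kr ->
  let x1 := / sqrt ((kr ^ 2 + kr + 1) / (2 * kr + 1) ^ 2) in
  let x2 := / sqrt ((kr ^ 2 + kr - 1) / (2 * kr + 1) ^ 2) in
  0 < x1 /\ 0 < x2 /\
  x1 * x1 = 4 - 3 / (kr ^ 2 + kr + 1) /\ x2 * x2 = 4 + 5 / (kr ^ 2 + kr - 1).
Proof.
  intros Hk x1 x2. unfold x1, x2.
  destruct (inv_sqrt_div_sq (kr ^ 2 + kr + 1) (2 * kr + 1) ltac:(nra) ltac:(lra))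
    as [Hx1 E1].
  destruct (inv_sqrt_div_sq (kr ^ 2 + kr - 1) (2 * kr + 1) ltac:(nra) ltac:(lra))
    as [Hx2 E2].
  repeat split; [exact Hx1 | exact Hx2 | rewrite E1 | rewrite E2]; field; nra.
Qed.

Lemma G_args_range kr x1 x2 :
  2 <= kr -> 0 < x1 -> 0 < x2 ->
  x1 * x1 = 4 - 3 / (kr ^ 2 + kr + 1) -> x2 * x2 = 4 + 5 / (kr ^ 2 + kr - 1) ->
  x1 <= 2 /\ 2 <= x2 <= 56 / 25.
Proof.
  intros Hk Hx1 Hx2 E1 E2.
  assert (H1 : 0 < 3 / (kr ^ 2 + kr + 1)) by (apply Rdiv_lt_0_compat; nra).
  assert (H2 : 0 < 5 / (kr ^ 2 + kr - 1) <= 5 / 5)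
    by (split; [apply Rdiv_lt_0_compat | apply div_antitone]; nra).
  repeat split; nra.
Qed.

Theorem lemma4 (k : nat) (hk : (2 <= k)%nat) :
  let kr := INR k in
  let p := / 2 ^ (k - 1) in
  p * G ((kr ^ 2 + kr + 1) / (2 * kr + 1) ^ 2)
    + (1 - p) * G ((kr ^ 2 + kr - 1) / (2 * kr + 1) ^ 2) >= G (/ 4)
  /\
  p * G ((kr ^ 2 + kr + 1) / (2 * kr + 1) ^ 2) + (1 - p) * / 2 >= G (/ 4).
Proof.
  intros kr p.
  assert (Hk : 2 <= kr) by (replace 2 with (INR 2) by (simpl; ring); apply le_INR, hk).
  destruct (G_args kr Hk) as (Hx1 & Hx2 & E1 & E2).
  set (x1 := / sqrt ((kr ^ 2 + kr + 1) / (2 * kr + 1) ^ 2)) in *.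
  set (x2 := / sqrt ((kr ^ 2 + kr - 1) / (2 * kr + 1) ^ 2)) in *.
  destruct (G_args_range kr x1 x2 Hk Hx1 Hx2 E1 E2) as (Hx1_le & Hx2_ge & Hx2_le).
  assert (Hx0 : / sqrt (/ 4) = 2).
  { replace (/ 4) with (/ 2 * / 2) by field. rewrite sqrt_square by lra. field. }
  pose proof (inv_pow2_bounds (k - 1)) as Hp. fold p in Hp.
  pose proof (tail_mix_le p x1 2 x2 ltac:(lra) Hx2_ge ltac:(lra)
                (balance k x1 x2 hk Hx1 Hx2 E1 E2)) as Hmix.
  rewrite <- Hx0 in Hmix.
  pose proof (G_mix_ge p (/ 4) _ _ Hmix) as HG.
  pose proof (G_le_half _ (tail_nonneg x2 ltac:(lra))) as Hhalf.
  split; [exact HG |].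
  assert (Hq : 0 <= 1 - p) by lra.
  pose proof (Rmult_le_compat_l _ _ _ Hq Hhalf). lra.
Qed.
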